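(* Let $\mathfrak g$ be of type $C_n$. For $s\ge1$, $\mathbf A_s=\mathbf A^1_s\sqcup\mathbf A^2_s$ where $$\mathbf A^1_s=\bigl\{\{\beta_{i_k,j_k}\}_{1\le k\le s}:\ i_k,j_k\in I\setminus\{n\},\ i_1<\dots<i_s\le j_s<j_{s-1}<\dots<j_1\bigr\},$$ $$\mathbf A^2_s=\bigl\{\{\alpha_{\ell,n}\}\cup\{\beta_{i_k,j_k}\}_{1\le k\le s-1}:\ \{\beta_{i_k,j_k}\}_{1\le k\le s-1}\in\mathbf A^1_{s-1},\ \ell\in I,\ \ell<i_1\bigr\}$$ (for $s=1$, $\mathbf A^2_1=\{\{\alpha_{\ell,n}\}:\ell\in I\}$). Moreover $\#\mathbf A^1_s=\binom{n-1}{2s}+\binom{n-1}{2s-1}$, $\#\mathbf A^2_s=\binom{n-1}{2s-1}+\binom{n-1}{2s-2}$, and $\sum_{s\ge0}\#\mathbf A_s=2^n$.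
   Context: Simple roots $\alpha_1,\dots,\alpha_n$ of $C_n$ numbered as in Bourbaki ($\alpha_n$ long), $I=\{1,\dots,n\}$. Set $\alpha_{i,j}=\alpha_i+\dots+\alpha_j$ for $i\le j$ and $\beta_{k,\ell}=\alpha_{k,n-1}+\alpha_{\ell,n}$ for $k\le\ell$ in $I\setminus\{n\}$; then $R^+=\{\alpha_{i,j}\}\cup\{\beta_{k,\ell}\}$ and $\theta=\beta_{1,1}$. Partial order: $\lambda\le\mu$ iff $\mu-\lambda$ is a nonnegative integer combination of simple roots. An antichain is a subset of $R^+$ of pairwise incomparable elements; $\Phi(A)=\{\alpha\in R^+:\alpha\ge\beta$ for some $\beta\in A\}$; $A$ is abelian if $\beta_1+\beta_2\notin R$ for all $\beta_1,\beta_2\in\Phi(A)$. $\mathbf A_s$ is the set of abelian antichains with $s$ elements; $\mathbf A_0$ and $\mathbf A^1_0$ consist of the empty antichain. Convention: $\binom{m}{k}=0$ if $k>m$ or $k<0$. *)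

From HB Require Import structures.
From mathcomp Require Import all_boot all_order all_algebra.
Set Implicit Arguments. Unset Strict Implicit. Unset Printing Implicit Defensive.
Import Order.TTheory GRing.Theory Num.Theory.

(* Labels: inl (i,j) stands for alpha_{i+1,j+1} (needs i <= j);
   inr (k,l) stands for beta_{k+1,l+1} (needs k <= l and l+1 <= n-1). *)
Definition label (n : nat) := (('I_n * 'I_n) + ('I_n * 'I_n))%type.

Definition validb (n : nat) (x : label n) : bool :=
  match x with
  | inl (i, j) => (i <= j)%N
  | inr (k, l) => (k <= l)%N && (l.+1 < n)%N
  end.

Definition posroot (n : nat) := {x : label n | validb x}.

(* Coefficient of alpha_{m+1} in the root with label x.
   alpha_{i,j} = alpha_i + ... + alpha_j ;
   beta_{k,l} = alpha_{k,n-1} + alpha_{l,n}. *)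
Definition coef (n : nat) (x : label n) (m : 'I_n) : int :=
  match x with
  | inl (i, j) => (nat_of_bool ((i <= m)%N && (m <= j)%N))%:Z
  | inr (k, l) => ((nat_of_bool ((k <= m)%N && (m <= n - 2)%N))%:Z
                  + (nat_of_bool ((l <= m)%N && (m <= n - 1)%N))%:Z)%R
  end.

Definition rcoef (n : nat) (a : posroot n) (m : 'I_n) : int := coef (val a) m.

Definition rle (n : nat) (a b : posroot n) : bool :=
  [forall m : 'I_n, (rcoef a m <= rcoef b m)%R].

Definition sum_is_root (n : nat) (a b : posroot n) : bool :=
  [exists c : posroot n,
     [forall m : 'I_n, (rcoef a m + rcoef b m == rcoef c m)%R]
  || [forall m : 'I_n, (rcoef a m + rcoef b m == - rcoef c m)%R]].

Definition antichain (n : nat) (A : {set posroot n}) : bool :=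
  [forall a in A, forall b in A, (a != b) ==> ~~ rle a b].

Definition Phi (n : nat) (A : {set posroot n}) : {set posroot n} :=
  [set x : posroot n | [exists b in A, rle b x]].

Definition abelian_set (n : nat) (A : {set posroot n}) : bool :=
  [forall b1 in Phi A, forall b2 in Phi A, ~~ sum_is_root b1 b2].

Definition Aset (n s : nat) : {set {set posroot n}} :=
  [set A : {set posroot n} | [&& antichain A, abelian_set A & #|A| == s]].

(* i_1 < ... < i_s <= j_s < ... < j_1, all in I \ {n}; f k = (i_{k+1}-1, j_{k+1}-1) *)
Definition chainB (n s : nat) (f : {ffun 'I_s -> 'I_n * 'I_n}) : bool :=
  [&& [forall k : 'I_s, ((f k).2.+1 < n)%N && ((f k).1 <= (f k).2)%N]
    & [forall k1 : 'I_s, forall k2 : 'I_s,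
         (k1 < k2)%N ==> ((f k1).1 < (f k2).1)%N && ((f k2).2 < (f k1).2)%N]].

Definition setB (n s : nat) (f : {ffun 'I_s -> 'I_n * 'I_n}) : {set posroot n} :=
  [set x : posroot n | [exists k : 'I_s, val x == inr (f k)]].

Definition A1set (n s : nat) : {set {set posroot n}} :=
  [set S : {set posroot n} |
     [exists f : {ffun 'I_s -> 'I_n * 'I_n}, chainB f && (S == setB f)]].

Definition is_alpha_to_n (n : nat) (l : 'I_n) (x : posroot n) : bool :=
  match val x with
  | inl (a, b) => (a == l) && (nat_of_ord b == n.-1)
  | inr _ => false
  end.

Definition A2set (n s : nat) : {set {set posroot n}} :=
  [set S : {set posroot n} |
     [exists l : 'I_n, exists f : {ffun 'I_s.-1 -> 'I_n * 'I_n},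
        [&& chainB f, [forall k : 'I_s.-1, (l < (f k).1)%N] &
            S == [set x : posroot n | is_alpha_to_n l x] :|: setB f]]].

From mathcomp Require Import all_boot all_algebra zify.
Set Implicit Arguments. Unset Strict Implicit. Unset Printing Implicit Defensive.

(* Write the positive roots in the epsilon basis: with alpha_k = e_k - e_(k+1)
   (k < n) and alpha_n = 2 e_n, the roots alpha_(i,n) and beta_(k,l) are
   e_i + e_n and e_k + e_l, i.e. exactly the roots e_i + e_j (i <= j) having
   coefficient 1 on alpha_n; we call them upper roots and write lo, hi for
   i, j (indices are 0-based in the code, so n becomes [ord_max] and I \ {n}
   the indices below N = n - 1).  The proof runs as follows.
   1. An antichain is abelian iff it consists of upper roots, and on upper
      roots e_i + e_j <= e_k + e_l iff k <= i and l <= j.  Hence an abelian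
      antichain is a family of pairs i_1 < ... < i_s <= j_s < ... < j_1, which
      is a chain as in A^1_s, plus possibly one root alpha_(l,n) = e_l + e_n
      with l < i_1, as in A^2_s; this gives A_s = A^1_s + A^2_s.
   2. The set of all endpoints i_k, j_k is a bijection from abelian antichains
      onto subsets of I; an antichain with s elements has 2s or 2s-1
      endpoints, and n is an endpoint iff the antichain lies in A^2_s.  The
      cardinalities then reduce to counting subsets of I, and summing over s
      counts all subsets of I, i.e. 2^n. *)

Section Rank.
Variables (T : finType) (key : T -> nat) (B : {set T}).

Definition rank (x : T) : nat := #|[set y in B | key y < key x]|.

Lemma rank_mono x y : key x <= key y -> rank x <= rank y.
Proof.
move=> le_xy; apply: subset_leq_card; apply/subsetP => z.
by rewrite !inE => /andP [-> lt_zx]; exact: leq_trans lt_zx le_xy.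
Qed.

Lemma rank_strict x y : x \in B -> key x < key y -> rank x < rank y.
Proof.
move=> xB lt_xy; apply: proper_card; apply/properP; split.
  apply/subsetP => z; rewrite !inE => /andP [-> lt_zx]; exact: ltn_trans lt_zx lt_xy.
by exists x; rewrite !inE ?xB ?lt_xy ?ltnn ?andbF.
Qed.

Lemma rank_lt x : x \in B -> rank x < #|B|.
Proof.
move=> xB; apply: proper_card; apply/properP; split.
  by apply/subsetP => y; rewrite inE => /andP [].
by exists x; rewrite // inE ltnn andbF.
Qed.

Hypothesis key_inj : {in B &, injective key}.

Lemma rank_inj : {in B &, injective rank}.
Proof.
move=> x y xB yB e; case: (ltngtP (key x) (key y)) => [lt|lt|]; last exact: key_inj.
- by have := rank_strict xB lt; rewrite e ltnn.
- by have := rank_strict yB lt; rewrite e ltnn.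
Qed.

Lemma rank_onto k : k < #|B| -> exists2 x, x \in B & rank x = k.
Proof.
move=> lt_k.
have uniq_ranks : uniq [seq rank x | x <- enum B].
  by rewrite map_inj_in_uniq ?enum_uniq // => x y; rewrite !mem_enum; exact: rank_inj.
have sub_ranks : {subset [seq rank x | x <- enum B] <= iota 0 #|B|}.
  by move=> r /mapP [x]; rewrite mem_enum mem_iota => xB ->; exact: rank_lt.
have size_ranks : size (iota 0 #|B|) <= size [seq rank x | x <- enum B].
  by rewrite size_iota size_map cardE.
have [_ ranksE] := uniq_min_size uniq_ranks sub_ranks size_ranks.
have : k \in iota 0 #|B| by rewrite mem_iota.
by rewrite -ranksE => /mapP [x]; rewrite mem_enum => xB ->; exists x.
Qed.

End Rank.

Lemma card_predU (T : finType) (P Q R : pred T) : (forall x, ~~ (Q x && R x)) ->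
  #|[set x | P x && (Q x || R x)]| = #|[set x | P x && Q x]| + #|[set x | P x && R x]|.
Proof.
move=> QR_excl; rewrite -cardsUI.
have -> : [set x | P x && Q x] :&: [set x | P x && R x] = set0.
  by apply/setP => x; rewrite !inE; move: (QR_excl x); case: (P x); case: (Q x); case: (R x).
rewrite cards0 addn0; apply: eq_card => x; rewrite !inE.
by case: (P x); case: (Q x); case: (R x).
Qed.

Section TypeC.
Variable N : nat.
Local Notation n := N.+1.

Definition ncoef (x : label n) (m : 'I_n) : nat :=
  match x with
  | inl (i, j) => (i <= m <= j)
  | inr (k, l) => (k <= m <= n - 2) + (l <= m <= n - 1)
  end.

Lemma coef_nat x m : coef x m = Posz (ncoef x m).
Proof. by case: x => [[i j]|[k l]] //=; rewrite PoszD. Qed.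

Lemma rleE (a b : posroot n) :
  rle a b = [forall m, ncoef (val a) m <= ncoef (val b) m].
Proof. by apply: eq_forallb => m; rewrite /rcoef !coef_nat lez_nat. Qed.

Definition upper (x : posroot n) : bool :=
  if val x is inl (_, j) then j == ord_max else true.
Definition lo (x : posroot n) : 'I_n := match val x with inl (i, _) | inr (i, _) => i end.
Definition hi (x : posroot n) : 'I_n := match val x with inl (_, j) | inr (_, j) => j end.

Lemma lo_le_hi x : lo x <= hi x.
Proof. by case: x => [[[i j]|[k l]] /= v]; rewrite /lo /hi //=; case/andP: v. Qed.

Lemma ncoef_top x : ncoef (val x) ord_max = upper x.
Proof.
case: x => [[[i j]|[k l]] /= v]; rewrite /upper /=; last lia.
by rewrite -val_eqE /=; have := leq_ord j; lia.
Qed.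

Lemma ncoef_upper x m : upper x ->
  ncoef (val x) m = if m < N then (lo x <= m) + (hi x <= m) else 1.
Proof.
have := leq_ord m; case: x => [[[i j]|[k l]] /= v]; rewrite /upper /lo /hi /=.
  by rewrite -val_eqE /= => ? /eqP eq_j; case: ltnP; lia.
by move=> *; case: ltnP; lia.
Qed.

(* The root e_i + e_j, meaningful for i <= j ([root0] is an arbitrary default). *)
Definition root0 : posroot n := exist _ (inl (ord0, ord0)) (leqnn 0).
Definition upper_root (i j : 'I_n) : posroot n :=
  insubd root0 (if j == ord_max then inl (i, j) else inr (i, j)).

Lemma upper_root_val (i j : 'I_n) : i <= j ->
  val (upper_root i j) = if j == ord_max then inl (i, j) else inr (i, j).
Proof.
move=> le_ij; rewrite insubdK //; case: eqP => [//|/eqP].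
by rewrite -val_eqE -topredE /=; have := leq_ord j; lia.
Qed.

Lemma upper_rootP (i j : 'I_n) : i <= j ->
  [/\ lo (upper_root i j) = i, hi (upper_root i j) = j & upper (upper_root i j)].
Proof.
move=> le_ij; rewrite /lo /hi /upper upper_root_val //.
by case: eqP => [->|]; split; rewrite ?eqxx.
Qed.

Lemma top_rootP (l : 'I_n) :
  [/\ lo (upper_root l ord_max) = l, hi (upper_root l ord_max) = ord_max
     & upper (upper_root l ord_max)].
Proof. exact: (upper_rootP (leq_ord l : l <= ord_max)). Qed.

Lemma upper_rootK x : upper x -> upper_root (lo x) (hi x) = x.
Proof.
move=> ux; apply: val_inj; rewrite upper_root_val ?lo_le_hi //.
case: x ux => [[[i j]|[k l]] /= v]; rewrite /upper /lo /hi /=.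
  by move=> /eqP ->; rewrite eqxx.
by case: eqP => // eq_l; move: v; rewrite eq_l /=; lia.
Qed.

Lemma upper_low_val x : upper x -> hi x < N -> val x = inr (lo x, hi x).
Proof.
move=> ux lt_hi; rewrite -{1}(upper_rootK ux) upper_root_val ?lo_le_hi //.
by case: eqP => // e; move: lt_hi; rewrite e /= ltnn.
Qed.

Lemma upper_inj x y : upper x -> upper y -> lo x = lo y -> hi x = hi y -> x = y.
Proof. by move=> ux uy e_lo e_hi; rewrite -(upper_rootK ux) -(upper_rootK uy) e_lo e_hi. Qed.

Lemma rle_upper x y : upper x -> upper y ->
  rle x y = (lo y <= lo x) && (hi y <= hi x).
Proof.
move=> ux uy; rewrite rleE; apply/forallP/andP => [le_xy|[le_lo le_hi] m]; last first.
  by rewrite !ncoef_upper //; case: ltnP; lia.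
have lohi_x := lo_le_hi x; have lohi_y := lo_le_hi y.
have key (m : 'I_n) : m < N -> (lo x <= m) + (hi x <= m) <= (lo y <= m) + (hi y <= m).
  by move=> lt_m; have := le_xy m; rewrite !ncoef_upper // lt_m.
split.
  by case: (ltnP (lo x) N) => [/key|]; have := leq_ord (lo y); lia.
by case: (ltnP (hi x) N) => [/key|]; have := leq_ord (hi y); lia.
Qed.

Lemma Phi_upper (A : {set posroot n}) a :
  {in A, forall x, upper x} -> a \in Phi A -> upper a.
Proof.
move=> upA; rewrite inE => /exists_inP [b bA]; rewrite rleE => /forallP /(_ ord_max).
by rewrite !ncoef_top upA //; case: (upper a).
Qed.

(* A sum of two upper roots has coefficient 2 on alpha_n, so it is no root. *)
Lemma upper_sum_not_root a b : upper a -> upper b -> ~~ sum_is_root a b.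
Proof.
move=> ua ub; apply/existsP => -[c /orP []] /forallP /(_ ord_max);
  by rewrite /rcoef !coef_nat !ncoef_top ua ub; case: (upper c).
Qed.

(* A lower root e_i - e_(j+1) lies below e_i + e_(j+1), and their sum 2 e_i
   is a root. *)
Lemma lower_sum_root x : ~~ upper x -> exists2 y, rle x y & sum_is_root x y.
Proof.
case: x => [[[i j]|[k l]] /= le_ij] //; rewrite /upper /= -val_eqE /= => ne_j.
have lt_j1 : j.+1 < n by have := leq_ord j; lia.
pose j1 : 'I_n := Ordinal lt_j1.
have le_ij1 : i <= j1 by rewrite /j1 /=; lia.
have [lo_y hi_y up_y] := upper_rootP le_ij1.
have [lo_c hi_c up_c] := upper_rootP (leqnn i).
exists (upper_root i j1).
  by rewrite rleE; apply/forallP => m /=; rewrite ncoef_upper // lo_y hi_y /=; case: ltnP; lia.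
apply/existsP; exists (upper_root i i); apply/orP; left; apply/forallP => m.
rewrite /rcoef !coef_nat -PoszD eqz_nat (ncoef_upper _ up_y) (ncoef_upper _ up_c).
rewrite lo_y hi_y lo_c hi_c /=.
by case: ltnP; lia.
Qed.

Lemma abelianE (A : {set posroot n}) : abelian_set A = [forall x in A, upper x].
Proof.
apply/idP/forall_inP => [ab x xA | upA].
  apply/negPn/negP => /lower_sum_root [y le_xy root_xy].
  have xP : x \in Phi A.
    by rewrite inE; apply/exists_inP; exists x; rewrite // rleE; apply/forallP.
  have yP : y \in Phi A by rewrite inE; apply/exists_inP; exists x.
  by move: ab => /forall_inP /(_ x xP) /forall_inP /(_ y yP); rewrite root_xy.
apply/forall_inP => a aP; apply/forall_inP => b bP.
exact: upper_sum_not_root (Phi_upper upA aP) (Phi_upper upA bP).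
Qed.

Definition upper_antichain (A : {set posroot n}) : bool :=
  [forall x in A, upper x] && antichain A.

Definition nested (x y : posroot n) : bool :=
  (lo x < lo y) && (hi y < hi x) || (lo y < lo x) && (hi x < hi y).

Lemma upper_antichainP (A : {set posroot n}) :
  reflect ({in A, forall x, upper x} /\ {in A &, forall x y, x != y -> nested x y})
          (upper_antichain A).
Proof.
apply: (iffP andP) => [[/forall_inP upA /forall_inP anti] | [upA nestA]].
  split=> // x y xA yA ne_xy.
  have := anti x xA => /forall_inP /(_ y yA) /implyP /(_ ne_xy).
  have := anti y yA => /forall_inP /(_ x xA) /implyP; rewrite eq_sym => /(_ ne_xy).
  by rewrite !rle_upper ?upA // /nested; lia.
split; first exact/forall_inP.
apply/forall_inP => x xA; apply/forall_inP => y yA; apply/implyP => ne_xy.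
by have := nestA x y xA yA ne_xy; rewrite rle_upper ?upA // /nested; lia.
Qed.

Lemma AsetE s : Aset n s = [set A | upper_antichain A && (#|A| == s)].
Proof.
by apply/setP => A; rewrite !inE abelianE /upper_antichain andbA [antichain A && _]andbC.
Qed.

Lemma upper_antichain_sub (A B : {set posroot n}) :
  B \subset A -> upper_antichain A -> upper_antichain B.
Proof.
move=> /subsetP subBA /upper_antichainP [upA nestA]; apply/upper_antichainP.
by split=> [x /subBA /upA | x y /subBA xA /subBA yA]; last exact: nestA.
Qed.

Section UpperAntichain.
Variable A : {set posroot n}.
Hypothesis uaA : upper_antichain A.

Lemma ua_upper x : x \in A -> upper x.
Proof. by case/upper_antichainP: uaA => upA _; apply: upA. Qed.

Lemma ua_nested x y : x \in A -> y \in A -> x != y -> nested x y.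
Proof. by case/upper_antichainP: uaA => _; apply. Qed.

Lemma ua_lo_inj : {in A &, injective lo}.
Proof.
move=> x y xA yA e; apply/eqP/negPn/negP => /(ua_nested xA yA).
by rewrite /nested e ltnn.
Qed.

Lemma ua_hi_inj : {in A &, injective hi}.
Proof.
move=> x y xA yA e; apply/eqP/negPn/negP => /(ua_nested xA yA).
by rewrite /nested e ltnn !andbF.
Qed.

Lemma ua_lo_le_hi x y : x \in A -> y \in A -> lo x <= hi y.
Proof.
move=> xA yA; have := lo_le_hi x; have := lo_le_hi y.
case: (eqVneq x y) => [-> //|/(ua_nested xA yA)]; rewrite /nested; lia.
Qed.

Lemma ua_lo_hi_eq x y : x \in A -> y \in A -> lo x = hi y -> x = y.
Proof.
move=> xA yA /(congr1 val) /= e; have := lo_le_hi x; have := lo_le_hi y.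
case: (eqVneq x y) => [//|/(ua_nested xA yA)]; rewrite /nested; lia.
Qed.

End UpperAntichain.

Definition has_top (A : {set posroot n}) : bool := [exists x in A, hi x == ord_max].

Lemma hi_lt_top (A : {set posroot n}) x : ~~ has_top A -> x \in A -> hi x < N.
Proof.
move=> noTop xA; have := leq_ord (hi x); case: (ltngtP (hi x) N) => // e _.
by move: noTop; apply: contraNT => _; apply/exists_inP; exists x; rewrite // -val_eqE /= e.
Qed.

Section Chains.
Variables (s : nat) (f : {ffun 'I_s -> 'I_n * 'I_n}).
Hypothesis chain_f : chainB f.

Lemma chain_bounds k : (f k).1 <= (f k).2 /\ (f k).2 < N.
Proof. by case/andP: chain_f => /forallP /(_ k) /andP []. Qed.

Lemma chain_nested (k1 k2 : 'I_s) :
  k1 < k2 -> (f k1).1 < (f k2).1 /\ (f k2).2 < (f k1).2.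
Proof. by case/andP: chain_f => _ /forallP /(_ k1) /forallP /(_ k2) /implyP h /h /andP []. Qed.

Definition chain_root (k : 'I_s) : posroot n := upper_root (f k).1 (f k).2.

Lemma chain_rootP k :
  [/\ lo (chain_root k) = (f k).1, hi (chain_root k) = (f k).2 & upper (chain_root k)].
Proof. by apply: upper_rootP; case: (chain_bounds k). Qed.

Lemma chain_root_val k : val (chain_root k) = inr (f k).
Proof.
have [lo_k hi_k up_k] := chain_rootP k; have [_ lt_k] := chain_bounds k.
by have := upper_low_val up_k; rewrite lo_k hi_k => /(_ lt_k) ->; case: (f k).
Qed.

Lemma setB_chain : setB f = [set chain_root k | k : 'I_s].
Proof.
apply/setP => x; rewrite inE; apply/existsP/imsetP => [[k /eqP val_x] | [k _ ->]].
  by exists k => //; apply/val_inj; rewrite val_x chain_root_val.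
by exists k; rewrite chain_root_val.
Qed.

Lemma chain_root_inj : injective chain_root.
Proof.
move=> k1 k2 /(congr1 lo); have [-> _ _] := chain_rootP k1; have [-> _ _] := chain_rootP k2.
move=> e; apply/val_inj; case: (ltngtP k1 k2) => // lt_k.
  by have [] := chain_nested lt_k; rewrite e ltnn.
by have [] := chain_nested lt_k; rewrite e ltnn.
Qed.

Lemma card_setB : #|setB f| = s.
Proof. by rewrite setB_chain card_imset ?card_ord //; exact: chain_root_inj. Qed.

Lemma setB_upper_antichain : upper_antichain (setB f).
Proof.
rewrite setB_chain; apply/upper_antichainP; split.
  by move=> _ /imsetP [k _ ->]; case: (chain_rootP k).
move=> _ _ /imsetP [k1 _ ->] /imsetP [k2 _ ->] ne_k.
have [lo1 hi1 _] := chain_rootP k1; have [lo2 hi2 _] := chain_rootP k2.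
rewrite /nested lo1 hi1 lo2 hi2.
case: (ltngtP k1 k2) => [lt_k | lt_k | /val_inj e]; last by rewrite e eqxx in ne_k.
  by have [-> ->] := chain_nested lt_k.
by have [-> ->] := chain_nested lt_k; rewrite orbT.
Qed.

Lemma setB_no_top : ~~ has_top (setB f).
Proof.
rewrite setB_chain; apply/exists_inP => -[_ /imsetP [k _ ->]].
have [_ -> _] := chain_rootP k; have [_ lt_k] := chain_bounds k.
by rewrite -val_eqE /=; lia.
Qed.

End Chains.

Definition lo_rank (A : {set posroot n}) (x : posroot n) : nat :=
  rank (fun y : posroot n => val (lo y)) A x.

Lemma lo_rank_mono (A : {set posroot n}) x y :
  lo x <= lo y -> lo_rank A x <= lo_rank A y.
Proof. by move=> le_lo; apply: rank_mono. Qed.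

(* Conversely, an upper antichain without alpha_(l,n) is a chain: listing its
   elements by increasing lower endpoint gives i_1 < ... and j_1 > ... *)
Lemma chain_of (B : {set posroot n}) t : upper_antichain B -> ~~ has_top B ->
  #|B| = t -> exists f : {ffun 'I_t -> 'I_n * 'I_n}, chainB f && (B == setB f).
Proof.
move=> uaB noTop cardB.
have key_inj : {in B &, injective (fun y : posroot n => val (lo y))}.
  by move=> x y xB yB /val_inj; exact: (ua_lo_inj uaB).
pose g (k : 'I_t) := odflt root0 [pick x in B | lo_rank B x == k].
have gP (k : 'I_t) : g k \in B /\ lo_rank B (g k) = k.
  rewrite /g; case: pickP => [x /andP [xB /eqP <-] | none] //.
  have [|x xB rk] := rank_onto key_inj (k := k); first by rewrite cardB.
  by move: (none x); rewrite /lo_rank xB rk eqxx.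
have g_nested (k1 k2 : 'I_t) : k1 < k2 -> lo (g k1) < lo (g k2) /\ hi (g k2) < hi (g k1).
  have [g1B rk1] := gP k1; have [g2B rk2] := gP k2 => lt_k.
  have lt_lo : lo (g k1) < lo (g k2).
    by rewrite ltnNge; apply/negP => /(lo_rank_mono B); rewrite rk1 rk2; lia.
  have ne_g : g k1 != g k2 by apply: contraTneq lt_lo => ->; rewrite ltnn.
  by have := ua_nested uaB g1B g2B ne_g; rewrite /nested; lia.
have g_val k : val (g k) = inr (lo (g k), hi (g k)).
  by have [gB _] := gP k; rewrite upper_low_val ?(ua_upper uaB) ?(hi_lt_top noTop).
exists [ffun k => (lo (g k), hi (g k))]; apply/andP; split.
  apply/andP; split; apply/forallP => k1; rewrite ?ffunE /=.
    by have [gB _] := gP k1; rewrite lo_le_hi andbT ltnS (hi_lt_top noTop).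
  by apply/forallP => k2; apply/implyP; rewrite !ffunE /= => /g_nested [-> ->].
apply/eqP/setP => x; rewrite inE; apply/idP/existsP => [xB | [k]].
  have lt_rk : lo_rank B x < t by rewrite -cardB rank_lt.
  exists (Ordinal lt_rk); rewrite ffunE.
  have [gB rk] := gP (Ordinal lt_rk).
  by rewrite -g_val (rank_inj key_inj gB xB rk).
rewrite ffunE -g_val => /eqP /val_inj ->; exact: (gP k).1.
Qed.

Lemma A1E s : A1set n s = [set A | upper_antichain A && (#|A| == s) && ~~ has_top A].
Proof.
apply/setP => A; rewrite !inE; apply/existsP/idP => [[f /andP [chain_f /eqP ->]] |].
  by rewrite setB_upper_antichain // card_setB // eqxx setB_no_top.
by move=> /andP [/andP [uaA /eqP cardA] noTop]; exact: chain_of uaA noTop cardA.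
Qed.

Lemma alpha_to_n_set (l : 'I_n) : [set x | is_alpha_to_n l x] = [set upper_root l ord_max].
Proof.
apply/setP => x; rewrite !inE /is_alpha_to_n; apply/idP/eqP => [| ->]; last first.
  by rewrite upper_root_val ?leq_ord // !eqxx.
case: x => [[[a b]|[k l']] v] //= /andP [/eqP e_a /eqP e_b].
apply/val_inj; rewrite upper_root_val ?leq_ord // eqxx /= e_a.
by congr (inl (_, _)); apply/val_inj.
Qed.

Lemma setB_add_top s (f : {ffun 'I_s -> 'I_n * 'I_n}) (l : 'I_n) :
  chainB f -> (forall k, l < (f k).1) ->
  upper_antichain (upper_root l ord_max |: setB f)
  /\ #|upper_root l ord_max |: setB f| = s.+1.
Proof.
move=> chain_f l_lt; have [lo_t hi_t up_t] := top_rootP l.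
have uaB := setB_upper_antichain chain_f.
split; last first.
  have notin : upper_root l ord_max \notin setB f.
    apply: contra (setB_no_top chain_f) => inB.
    by apply/exists_inP; exists (upper_root l ord_max); rewrite ?hi_t.
  by rewrite cardsU1 notin card_setB.
have top_nested y : y \in setB f -> nested (upper_root l ord_max) y.
  rewrite setB_chain // => /imsetP [k _ ->].
  have [lo_k hi_k _] := chain_rootP chain_f k; have [_ lt_k] := chain_bounds chain_f k.
  by rewrite /nested lo_t hi_t lo_k hi_k l_lt /=; lia.
apply/upper_antichainP; split; first by move=> x /setU1P [-> | /(ua_upper uaB)].
move=> x y /setU1P [-> | xB] /setU1P [-> | yB] ne_xy; first by rewrite eqxx in ne_xy.
- exact: top_nested.
- by rewrite /nested orbC; exact: top_nested.
- exact: (ua_nested uaB xB yB ne_xy).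
Qed.

(* Step 1, second half: A^2_s consists of the abelian antichains containing
   some alpha_(l,n); removing it leaves a chain with l < i_1. *)
Lemma A2E s : 0 < s ->
  A2set n s = [set A | upper_antichain A && (#|A| == s) && has_top A].
Proof.
move=> s_gt0; apply/setP => A; rewrite !inE; apply/existsP/idP.
  move=> [l /existsP [f /and3P [chain_f /forallP l_lt /eqP ->]]].
  have [uaA cardA] := setB_add_top chain_f l_lt.
  rewrite alpha_to_n_set uaA cardA prednK // eqxx; apply/exists_inP.
  by exists (upper_root l ord_max); [exact: setU11 | case: (top_rootP l) => _ -> _].
move=> /andP [/andP [uaA /eqP cardA] /exists_inP [a aA /eqP hi_a]].
have uaB : upper_antichain (A :\ a) := upper_antichain_sub (subsetDl A [set a]) uaA.
have noTopB : ~~ has_top (A :\ a).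
  apply/exists_inP => -[x /setD1P [ne_xa xA] /eqP hi_x].
  by move: ne_xa; rewrite (ua_hi_inj uaA xA aA (etrans hi_x (esym hi_a))) eqxx.
have cardB : #|A :\ a| = s.-1 by move: cardA; rewrite (cardsD1 a) aA; lia.
have [f /andP [chain_f /eqP eB]] := chain_of uaB noTopB cardB.
exists (lo a); apply/existsP; exists f; rewrite chain_f /=; apply/andP; split.
  apply/forallP => k; have kB : chain_root f k \in A :\ a.
    by rewrite eB setB_chain //; apply: imset_f.
  have [ne_ka kA] := setD1P kB.
  have [lo_k hi_k _] := chain_rootP chain_f k; have [_ lt_k] := chain_bounds chain_f k.
  by have := ua_nested uaA kA aA ne_ka; rewrite /nested lo_k hi_k hi_a /=; lia.
rewrite alpha_to_n_set -eB -hi_a (upper_rootK (ua_upper uaA aA)).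
by rewrite setD1K.
Qed.

Lemma Aset_split s : 0 < s -> Aset n s = A1set n s :|: A2set n s.
Proof.
move=> s_gt0; rewrite AsetE A1E A2E //; apply/setP => A; rewrite !inE.
by case: (_ && _); case: has_top.
Qed.

Lemma A1_A2_disjoint s : 0 < s -> [disjoint A1set n s & A2set n s].
Proof.
move=> s_gt0; rewrite -setI_eq0 A1E A2E //; apply/eqP/setP => A; rewrite !inE.
by case: has_top; rewrite ?andbF.
Qed.

Definition ends (A : {set posroot n}) : {set 'I_n} :=
  [set lo x | x in A] :|: [set hi x | x in A].

Definition below (U : {set 'I_n}) (a : 'I_n) : nat := rank (fun u : 'I_n => val u) U a.
Definition above (U : {set 'I_n}) (a : 'I_n) : nat :=
  rank (fun u : 'I_n => val (rev_ord u)) U a.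

Section BelowAbove.
Variable U : {set 'I_n}.

Lemma aboveE (a : 'I_n) : above U a = #|[set u in U | a < u]|.
Proof.
apply: eq_card => u; rewrite !inE /=; congr (_ && _).
by have := ltn_ord u; have := ltn_ord a; lia.
Qed.

Lemma above_mono (a b : 'I_n) : a <= b -> above U b <= above U a.
Proof. by move=> le_ab; apply: rank_mono => /=; have := ltn_ord b; lia. Qed.

Lemma below_strict (a b : 'I_n) : a \in U -> a < b -> below U a < below U b.
Proof. exact: rank_strict. Qed.

Lemma below_inj : {in U &, injective (below U)}.
Proof. by apply: rank_inj => a b _ _; apply: val_inj. Qed.

Lemma above_inj : {in U &, injective (above U)}.
Proof.
apply: rank_inj => a b _ _ /= e; apply: ord_inj.
by have := ltn_ord a; have := ltn_ord b; lia.
Qed.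

Lemma below_above (w : 'I_n) : w \in U -> below U w + above U w + 1 = #|U|.
Proof.
move=> wU; rewrite aboveE (cardsD1 w U) wU.
have -> : U :\ w = [set u | (u \in U) && ((u < w) || (w < u))].
  by apply/setP => u; rewrite !inE -val_eqE neq_ltn andbC.
rewrite card_predU ?addn1 // => u; lia.
Qed.

End BelowAbove.

Section Ends.
Variable A : {set posroot n}.
Hypothesis uaA : upper_antichain A.

Lemma lo_in_ends x : x \in A -> lo x \in ends A.
Proof. by move=> xA; apply/setUP; left; exact: imset_f. Qed.

Lemma hi_in_ends x : x \in A -> hi x \in ends A.
Proof. by move=> xA; apply/setUP; right; exact: imset_f. Qed.

(* The endpoints below lo x are the lower endpoints of the elements of [A]
   enclosing x ... *)
Lemma below_ends x : x \in A -> below (ends A) (lo x) = lo_rank A x.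
Proof.
move=> xA; have lo_inj : {in [set y in A | lo y < lo x] &, injective lo}.
  by move=> y z; rewrite !inE => /andP [yA _] /andP [zA _]; exact: (ua_lo_inj uaA).
rewrite /lo_rank /rank -(card_in_imset lo_inj); apply: eq_card => u; rewrite !inE /=.
apply/andP/imsetP => [[/orP [] /imsetP [y yA ->] lt_u] | [y]].
- by exists y; rewrite // inE yA.
- by have := ua_lo_le_hi uaA xA yA; lia.
- by rewrite inE => /andP [yA lt_y] ->; split; first by rewrite imset_f.
Qed.

(* ... and so are the upper endpoints above hi x. *)
Lemma above_ends x : x \in A -> above (ends A) (hi x) = lo_rank A x.
Proof.
move=> xA; have hi_inj : {in [set y in A | lo y < lo x] &, injective hi}.
  by move=> y z; rewrite !inE => /andP [yA _] /andP [zA _]; exact: (ua_hi_inj uaA).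
rewrite aboveE /lo_rank /rank -(card_in_imset hi_inj); apply: eq_card => u; rewrite !inE /=.
apply/andP/imsetP => [[/orP [] /imsetP [y yA ->] lt_u] | [y]].
- by have := ua_lo_le_hi uaA yA xA; lia.
- exists y => //; rewrite inE yA /=; case: (eqVneq y x) => [e | ne_yx].
    by move: lt_u; rewrite e ltnn.
  by have := ua_nested uaA yA xA ne_yx; rewrite /nested; lia.
- rewrite inE => /andP [yA lt_y] ->; split; first by rewrite imset_f ?orbT.
  have ne_yx : y != x by apply: contraTneq lt_y => ->; rewrite ltnn.
  by have := ua_nested uaA yA xA ne_yx; rewrite /nested; lia.
Qed.

Lemma mem_ends x : (x \in A) =
  [&& upper x, lo x \in ends A, hi x \in ends A &
      below (ends A) (lo x) == above (ends A) (hi x)].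
Proof.
apply/idP/and4P => [xA | [ux lo_x hi_x /eqP e]].
  by rewrite (ua_upper uaA xA) lo_in_ends // hi_in_ends // below_ends // above_ends.
have by_lo y : y \in A -> lo x = lo y -> x = y.
  move=> yA e_lo; apply: (upper_inj ux (ua_upper uaA yA) e_lo).
  by apply: (above_inj hi_x (hi_in_ends yA)); rewrite -e e_lo below_ends // above_ends.
have by_hi y : y \in A -> hi x = hi y -> x = y.
  move=> yA e_hi; apply: (upper_inj ux (ua_upper uaA yA) _ e_hi).
  by apply: (below_inj lo_x (lo_in_ends yA)); rewrite e e_hi above_ends // below_ends.
move: (hi_x); rewrite inE => /orP [] /imsetP [z zA e_hi]; last by rewrite (by_hi z zA e_hi).
move: (lo_x); rewrite inE => /orP [] /imsetP [y yA e_lo]; first by rewrite (by_lo y yA e_lo).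
suff -> : x = z by [].
apply: (by_lo z zA); apply: val_inj; have := ua_lo_le_hi uaA zA yA; have := lo_le_hi x.
by move: e_lo e_hi => /(congr1 val) /= -> /(congr1 val) /= ->; lia.
Qed.

(* An antichain with s elements has 2s or 2s - 1 endpoints: only one
   element can have equal endpoints. *)
Lemma card_ends : #|ends A| <= #|A|.*2 <= #|ends A|.+1.
Proof.
have le1 : #|[set lo x | x in A] :&: [set hi x | x in A]| <= 1.
  apply/card_le1_eqP => _ _ /setIP [/imsetP [x xA ->] /imsetP [y yA e]]
    /setIP [/imsetP [x' xA' ->] /imsetP [y' yA' e']].
  move: (e) (e') => /(ua_lo_hi_eq uaA xA yA) e_xy /(ua_lo_hi_eq uaA xA' yA') e_xy'.
  move: e e'; rewrite -{}e_xy -{}e_xy' => /(congr1 val) /= e /(congr1 val) /= e'.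
  case: (eqVneq x x') => [-> //| /(ua_nested uaA xA xA')]; rewrite /nested; lia.
have -> : #|A|.*2 = #|[set lo x | x in A]| + #|[set hi x | x in A]|.
  by rewrite !card_in_imset -?addnn //; [exact: (ua_hi_inj uaA) | exact: (ua_lo_inj uaA)].
by rewrite /ends -cardsUI leq_addr /= -[X in _ <= X]addn1 leq_add2l.
Qed.

Lemma top_ends : (ord_max \in ends A) = has_top A.
Proof.
apply/idP/exists_inP => [| [x xA /eqP <-]]; last exact: hi_in_ends.
rewrite inE => /orP [] /imsetP [x xA e].
  exists x => //; apply/eqP/val_inj; have := lo_le_hi x; have := leq_ord (hi x).
  by move: e => /(congr1 val) /= <-; lia.
by exists x; rewrite // e.
Qed.

End Ends.

Lemma ends_inj (A B : {set posroot n}) :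
  upper_antichain A -> upper_antichain B -> ends A = ends B -> A = B.
Proof. by move=> uaA uaB e; apply/setP => x; rewrite (mem_ends uaA) (mem_ends uaB) e. Qed.

Lemma ends_onto (U : {set 'I_n}) : exists2 A, upper_antichain A & ends A = U.
Proof.
pose A := [set x | [&& upper x, lo x \in U, hi x \in U & below U (lo x) == above U (hi x)]].
have uaA : upper_antichain A.
  apply/upper_antichainP; split=> [x | x y]; first by rewrite inE => /and4P [].
  rewrite !inE => /and4P [ux lo_x hi_x /eqP e_x] /and4P [uy lo_y hi_y /eqP e_y] ne_xy.
  have ne_lo : lo x != lo y.
    apply: contra ne_xy => /eqP e_lo; apply/eqP/(upper_inj ux uy e_lo).
    by apply: (above_inj hi_x hi_y); rewrite -e_x -e_y e_lo.
  have above_lt (a b : 'I_n) : above U a < above U b -> b < a.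
    by move=> lt_ab; rewrite ltnNge; apply: contraTN lt_ab => /(above_mono U); rewrite -leqNgt.
  rewrite /nested; case: (ltngtP (lo x) (lo y)) => [lt_lo | lt_lo | /val_inj e_lo].
  - by have := below_strict lo_x lt_lo; rewrite e_x e_y => /above_lt ->.
  - by have := below_strict lo_y lt_lo; rewrite e_x e_y => /above_lt ->; rewrite orbT.
  - by rewrite e_lo eqxx in ne_lo.
exists A => //; apply/setP => u; apply/idP/idP => [| uU].
  by rewrite inE => /orP [] /imsetP [x]; rewrite inE => /and4P [_ ? ? _] ->.
have sum_u := below_above uU; have lt_k : #|U| - 1 - below U u < #|U| by lia.
have [v vU e_v] := rank_onto (fun a b _ _ => @val_inj _ _ _ a b) lt_k.
have sum_v := below_above vU; rewrite -[rank _ _ v]/(below U v) in e_v.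
case: (leqP u v) => [le_uv | /ltnW le_vu].
  have [lo_r hi_r up_r] := upper_rootP le_uv.
  have rA : upper_root u v \in A by rewrite inE lo_r hi_r up_r uU vU /=; apply/eqP; lia.
  by rewrite -lo_r lo_in_ends.
have [lo_r hi_r up_r] := upper_rootP le_vu.
have rA : upper_root v u \in A by rewrite inE lo_r hi_r up_r uU vU /=; apply/eqP; lia.
by rewrite -hi_r hi_in_ends.
Qed.

Lemma card_by_ends (P : pred {set 'I_n}) :
  #|[set A | upper_antichain A && P (ends A)]| = #|[set U | P U]|.
Proof.
rewrite -(card_in_imset (f := ends)); last first.
  by move=> A B; rewrite !inE => /andP [uaA _] /andP [uaB _]; exact: ends_inj.
apply: eq_card => U; rewrite inE; apply/imsetP/idP => [[A] | PU].
  by rewrite inE => /andP [_ PA] ->.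
by have [A uaA eA] := ends_onto U; exists A; rewrite // inE uaA eA.
Qed.

Lemma card_ends_size (A : {set posroot n}) s : 0 < s -> upper_antichain A ->
  (#|A| == s) = (#|ends A| == 2 * s) || (#|ends A| == 2 * s - 1).
Proof. by move=> s_gt0 /card_ends; lia. Qed.

Lemma subset_notop (U : {set 'I_n}) : (U \subset [set~ ord_max]) = (ord_max \notin U).
Proof. by rewrite subsetC sub1set inE. Qed.

Lemma card_subsets_notop k :
  #|[set U : {set 'I_n} | (U \subset [set~ ord_max]) && (#|U| == k)]| = 'C(N, k).
Proof. by rewrite cards_draws cardsC1 card_ord. Qed.

(* A (k+1)-subset containing n is a k-subset of the other N indices. *)
Lemma card_subsets_top k :
  #|[set U : {set 'I_n} | (ord_max \in U) && (#|U| == k.+1)]| = 'C(N, k).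
Proof.
have := cardsID [set U : {set 'I_n} | ord_max \in U] [set U : {set 'I_n} | #|U| == k.+1].
rewrite card_draws card_ord binS -(card_subsets_notop k.+1).
have -> : [set U : {set 'I_n} | #|U| == k.+1] :\: [set U : {set 'I_n} | ord_max \in U] =
          [set U : {set 'I_n} | (U \subset [set~ ord_max]) && (#|U| == k.+1)].
  by apply/setP => U; rewrite !inE subset_notop andbC.
have -> : [set U : {set 'I_n} | #|U| == k.+1] :&: [set U : {set 'I_n} | ord_max \in U] =
          [set U : {set 'I_n} | (ord_max \in U) && (#|U| == k.+1)].
  by apply/setP => U; rewrite !inE andbC.
by rewrite [RHS]addnC => /addIn.
Qed.

Lemma card_A1 s : 0 < s -> #|A1set n s| = 'C(N, 2 * s) + 'C(N, 2 * s - 1).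
Proof.
move=> s_gt0; rewrite A1E -!card_subsets_notop -card_predU => [|U]; last by lia.
rewrite -card_by_ends; apply: eq_card => A; rewrite !inE.
case uaA: (upper_antichain A) => //=.
by rewrite (card_ends_size s_gt0 uaA) subset_notop (top_ends uaA) andbC.
Qed.

Lemma card_A2 s : 0 < s -> #|A2set n s| = 'C(N, 2 * s - 1) + 'C(N, 2 * s - 2).
Proof.
move=> s_gt0; have e1 : 2 * s = (2 * s - 1).+1 by lia.
have e2 : 2 * s - 1 = (2 * s - 2).+1 by lia.
rewrite A2E // -(card_subsets_top (2 * s - 1)) -(card_subsets_top (2 * s - 2)) -e1 -e2.
rewrite -card_predU => [|U]; last by lia.
rewrite -card_by_ends; apply: eq_card => A; rewrite inE [in RHS]inE.
case uaA: (upper_antichain A) => //=.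
by rewrite (card_ends_size s_gt0 uaA) (top_ends uaA) andbC.
Qed.

Lemma sum_card_Aset M :
  \sum_(s < M) #|Aset n s| = #|[set A | upper_antichain A && (#|A| < M)]|.
Proof.
elim: M => [|M IH].
  by rewrite big_ord0; apply/esym/eqP; rewrite cards_eq0; apply/eqP/setP => A; rewrite !inE andbF.
rewrite big_ord_recr /= IH AsetE -card_predU => [|A]; last by lia.
by apply: eq_card => A; rewrite !inE ltnS [_ || _]orbC -leq_eqVlt.
Qed.

Lemma card_all_Aset : \sum_(s < #|{: posroot n}|.+1) #|Aset n s| = 2 ^ n.
Proof.
rewrite sum_card_Aset.
have -> : [set A | upper_antichain A && (#|A| < #|{: posroot n}|.+1)] =
          [set A | upper_antichain A && predT (ends A)].
  by apply/setP => A; rewrite !inE ltnS max_card.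
rewrite card_by_ends (_ : 2 ^ n = #|powerset [set: 'I_n]|); last first.
  by rewrite card_powerset cardsT card_ord.
by apply: eq_card => U; rewrite !inE subsetT.
Qed.

End TypeC.

Theorem mainTheorem10 (n : nat) (hn : (0 < n)%N) :
  (forall s : nat, (1 <= s)%N ->
     [/\ Aset n s = A1set n s :|: A2set n s,
         [disjoint A1set n s & A2set n s],
         #|A1set n s| = ('C(n - 1, 2 * s) + 'C(n - 1, 2 * s - 1))%N &
         #|A2set n s| = ('C(n - 1, 2 * s - 1) + 'C(n - 1, 2 * s - 2))%N])
  /\ (\sum_(s < #|{: posroot n}|.+1) #|Aset n s|)%N = (2 ^ n)%N.
Proof.
case: n hn => [//|N] _; split; last exact: card_all_Aset.
move=> s s_gt0; rewrite subn1 /=.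
split; [exact: Aset_split | exact: A1_A2_disjoint | exact: card_A1 | exact: card_A2].
Qed.
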